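(* Let $\mathbb{F}_q$ be a finite field and $n\geq 1$. Let $\overline{A}$ be an $\mathbb{F}_q$-subalgebra of $M_n(\mathbb{F}_q)$ such that $N_{\mathbb{F}_q}(\overline{A})=N_{\mathbb{F}_q}(M_n(\mathbb{F}_q))$. Then $\overline{A}=M_n(\mathbb{F}_q)$.
   Context: For a commutative ring $R$ and an $R$-algebra $C$, the null ideal is $N_R(C)=\{f\in R[X]\mid f(c)=0 \text{ for all } c\in C\}$. Subalgebras are unital (contain the identity matrix). *)

From HB Require Import structures.
From mathcomp Require Import all_boot all_order all_algebra all_field.
Set Implicit Arguments. Unset Strict Implicit. Unset Printing Implicit Defensive.
Import GRing.Theory.
Local Open Scope ring_scope.

Definition is_subalgebra (F : fieldType) (n : nat) (A : 'M[F]_n.+1 -> Prop) : Prop :=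
  [/\ A 1%:M,
      (forall a b, A a -> A b -> A (a + b)),
      (forall (c : F) a, A a -> A (c *: a))
    & (forall a b, A a -> A b -> A (a *m b))].

Definition null_ideal (F : fieldType) (n : nat) (C : 'M[F]_n.+1 -> Prop) :
  {poly F} -> Prop :=
  fun f => forall c, C c -> horner_mx c f = 0.

From Stdlib Require Import Classical.
From HB Require Import structures.
From mathcomp Require Import all_boot all_order all_algebra all_field all_fingroup.
From mathcomp Require Import cyclic zify.
Set Implicit Arguments. Unset Strict Implicit. Unset Printing Implicit Defensive.
Import GRing.Theory FinRing.Theory.
Local Open Scope ring_scope.

(* Let q be irreducible of degree n+1 over F.  The product f of all minimal
   polynomials not divisible by q kills every matrix M with q not dividing
   mxminpoly M, but not a companion matrix of q; as N(A) = N(M_n(F)), some M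
   in A is a root of q, and then F[M], a subfield of A of dimension n+1, acts
   transitively on nonzero columns and on nonzero rows.
   For K = |M_n(F)|!, every c has c^K idempotent, so c (1 - c^K) is
   nilpotent.  If every nilpotent b in A had b^n = 0, then X^n (1 - X^K)
   would kill A but not the nilpotent shift matrix.  So A contains a nilpotent
   b with b^n <> 0; b^n = u v has rank one, and X u v Y with X, Y in F[M]
   yields every matrix unit. *)

Lemma natr_card_finField (F : finFieldType) : #|F|%:R = 0 :> F.
Proof. by have := expg_cardG (in_setT (1 : F)); rewrite cardsT zmodXgE. Qed.

Lemma size_XnsubX (R : nzRingType) m : (1 < m)%N -> size ('X^m - 'X : {poly R}) = m.+1.
Proof. by move=> m_gt1; rewrite size_polyDl ?size_polyXn // size_polyN size_polyX. Qed.

Lemma separable_XnsubX (R : idomainType) m :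
  m%:R = 0 :> R -> separable_poly ('X^m - 'X : {poly R}).
Proof.
move=> mR0; rewrite unlock /separable_poly derivB derivXn derivX.
rewrite -mulr_natr -polyC_natr mR0 mulr0 sub0r.
by apply/coprimepP => d _; rewrite dvdpNr dvdp1 size_poly_eq1.
Qed.

Section FiniteFieldExtension.
Variable F : finFieldType.
Local Notation Q := #|F|.

Lemma size_uniq_fieldExt (L : fieldExtType F) (rs : seq L) :
  uniq rs -> (size rs <= Q ^ \dim {:L})%N.
Proof.
move=> rs_uniq; have QD_gt1 : (1 < Q ^ \dim {:L})%N.
  by rewrite -(expn0 Q) ltn_exp2l ?finNzRing_gt1 ?adim_gt0.
rewrite -ltnS -(size_XnsubX L QD_gt1) max_poly_roots //.
  by rewrite -size_poly_gt0 size_XnsubX.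
apply/allP => r _; rewrite /root !hornerE subr_eq0.
by rewrite -Fermat's_little_theorem memvf.
Qed.

Lemma dim_dvdn_of_roots (L : splittingFieldType F) N (rs : seq L) :
  <<1 & rs>>%VS = fullv -> {in rs, forall r, r ^+ (Q ^ N) = r} ->
  (\dim {:L} %| N)%N.
Proof.
move=> defL rs_roots.
have [alpha gen_alpha Dalpha] := finField_galois_generator (sub1v {:L}%AS).
have alpha_gal : alpha \in ('Gal({:L} / 1))%g by rewrite (eqP gen_alpha) cycle_id.
have alphaX k x : (alpha ^+ k)%g x = x ^+ (Q ^ k).
  elim: k => [|k IHk]; first by rewrite expg0 gal_id expr1.
  by rewrite expgSr galM ?memvf // IHk Dalpha ?memvf // dimv1 -exprM expnSr.
have alphaN1 : (alpha ^+ N)%g = 1%g.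
  apply/eqP/gal_eqP => x _; rewrite gal_id.
  suff : (fullv <= fixedField [set (alpha ^+ N)%g])%VS.
    by move/subvP/(_ x (memvf x))/mem_fixedFieldP => [_ /(_ _ (set11 _))].
  rewrite -defL; apply/Fadjoin_seqP; split => [|r rs_r].
    apply/subvP => a a1; apply/fixedFieldP; rewrite ?memvf // => _ /set1P ->.
    by rewrite (fixed_gal (sub1v _)) // groupX.
  by apply/fixedFieldP; rewrite ?memvf // => _ /set1P ->; rewrite alphaX rs_roots.
have : (#[alpha]%g %| N)%N by rewrite order_dvdn alphaN1.
by rewrite /order -(eqP gen_alpha) -galois_dim ?finField_galois ?sub1v // dimv1 divn1.
Qed.

Lemma finField_ext_exists N : (0 < N)%N -> exists L : splittingFieldType F, \dim {:L} = N.
Proof.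
move=> N_gt0; pose m := (Q ^ N)%N.
have m_gt1 : (1 < m)%N by rewrite -(expn0 Q) ltn_exp2l ?finNzRing_gt1.
pose p : {poly F} := 'X^m - 'X.
have p_neq0 : p != 0 by rewrite -size_poly_gt0 size_XnsubX.
have [L [rs Dp defL]] := FinSplittingFieldFor p_neq0.
have pLE : map_poly (in_alg L) p = 'X^m - 'X by rewrite rmorphB /= map_polyXn map_polyX.
rewrite {}pLE in Dp; exists L.
have rs_uniq : uniq rs.
  rewrite -separable_prod_XsubC -(eqp_separable Dp) separable_XnsubX //.
  by rewrite -(rmorph_nat (in_alg L)) natrX natr_card_finField expr0n gtn_eqF // rmorph0.
have size_rs : size rs = m.
  by have /eqp_size := Dp; rewrite size_prod_XsubC size_XnsubX // => -[].
have rs_roots : {in rs, forall r, r ^+ m = r}.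
  move=> r rs_r; apply/eqP; rewrite -subr_eq0.
  by have := root_prod_XsubC rs r; rewrite -(eqp_root Dp) rs_r /root !hornerE.
apply/eqP; rewrite eqn_leq dvdn_leq ?(dim_dvdn_of_roots defL rs_roots) //=.
by rewrite -(leq_exp2l _ _ (finNzRing_gt1 F)) -/m -size_rs size_uniq_fieldExt.
Qed.

Lemma exists_irreducible_poly N : (0 < N)%N ->
  exists q : {poly F}, [/\ irreducible_poly q, q \is monic & size q = N.+1].
Proof.
move=> N_gt0; have [L dimL] := finField_ext_exists N_gt0.
pose x := separable_generator 1 {:L}.
have defL : {:L}%VS = <<1; x>>%VS.
  have /and3P[_ sepL _] := finField_galois (sub1v {:L}%AS).
  exact: eq_adjoin_separable_generator sepL (sub1v _).
have [q Dq] := polyOver1P (minPolyOver 1 x).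
have size_q : size q = N.+1.
  rewrite -(size_map_poly (in_alg L)) -Dq size_minPoly adjoin_degreeE.
  by rewrite -defL dimv1 divn1 dimL.
exists q; split=> //; last by rewrite -(map_monic (in_alg L)) -Dq monic_minPoly.
split=> [|d]; first by rewrite size_q ltnS N_gt0.
have := @minPoly_irr _ _ 1%AS x (map_poly (in_alg L) d).
rewrite Dq eqp_map -size_poly_eq1 size_map_poly dvdp_map => irr_d /negPf d_ncst d_q.
by rewrite -[_ %= _]orbF -d_ncst irr_d //; apply/polyOver1P; exists d.
Qed.

End FiniteFieldExtension.

Lemma irreducible_dvdp_prod (R : idomainType) (q : {poly R}) (I : Type) (r : seq I)
    (P : pred I) (g : I -> {poly R}) :
  irreducible_poly q -> q %| \prod_(i <- r | P i) g i -> exists2 i, P i & q %| g i.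
Proof.
move=> irr_q; elim: r => [|i r IHr].
  by rewrite big_nil dvdp1 => /eqP size_q; case: irr_q; rewrite size_q.
rewrite big_cons; case: ifP => Pi; last exact: IHr.
have [q_gi|q_ngi] := boolP (q %| g i); first by exists i.
by rewrite Gauss_dvdpr ?irreducible_poly_coprime.
Qed.

Section MatrixPolynomials.
Variables (F : fieldType) (n : nat).
Implicit Types (q : {poly F}) (M : 'M[F]_n.+1).

Lemma monic_has_matrix_root q :
  q \is monic -> size q = n.+2 -> exists M, horner_mx M q = 0.
Proof.
move=> q_monic size_q; have := companionmxK q_monic.
move: (companionmx q); rewrite size_q => C charC.
by exists C; rewrite -[X in horner_mx _ X]charC Cayley_Hamilton.
Qed.

Lemma mxminpoly_irreducible_root q M :
  irreducible_poly q -> horner_mx M q = 0 -> mxminpoly M %= q.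
Proof.
case=> _ irr_q qM; apply: irr_q; last exact: mxminpoly_min.
by rewrite size_mxminpoly eqSS -lt0n mxminpoly_nonconstant.
Qed.

Lemma dvdp_mxminpoly_root q M :
  size q = n.+2 -> q %| mxminpoly M -> horner_mx M q = 0.
Proof.
move=> size_q q_dvd; apply/mxminpoly_minP.
have mM_neq0 : mxminpoly M != 0 by rewrite monic_neq0 ?mxminpoly_monic.
have size_mM : (size (mxminpoly M) <= n.+2)%N.
  rewrite -(size_char_poly M) dvdp_leq ?mxminpoly_dvd_char //.
  by rewrite monic_neq0 ?char_poly_monic.
have : q %= mxminpoly M by rewrite -dvdp_size_eqp // eqn_leq dvdp_leq // size_q.
by move/eqp_dvdr->.
Qed.

Lemma horner_mx_coprime_unit q p M :
  horner_mx M q = 0 -> coprimep q p -> horner_mx M p \in unitmx.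
Proof.
move=> qM /Bezout_eq1_coprimepP [[u v] /= Duv].
have : horner_mx M (u * q + v * p) = 1 by rewrite Duv rmorph1.
by rewrite rmorphD !rmorphM /= qM mulr0 add0r -mulmxE => /mulmx1_unit[].
Qed.

Lemma horner_mx_trmx M p : (horner_mx M p)^T = horner_mx M^T p.
Proof.
elim/poly_ind: p => [|p c IHp]; first by rewrite !rmorph0 trmx0.
rewrite !rmorphD !rmorphM /= !horner_mx_X !horner_mx_C linearD /= -mulmxE.
rewrite trmx_mul IHp tr_scalar_mx !mulmxE -{1}[M^T]horner_mx_X -rmorphM mulrC rmorphM /=.
by rewrite horner_mx_X.
Qed.

End MatrixPolynomials.

Lemma horner_mx_col_onto (F : finFieldType) n (q : {poly F}) (M : 'M[F]_n.+1)
    (u : 'cV[F]_n.+1) :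
  irreducible_poly q -> size q = n.+2 -> horner_mx M q = 0 ->
  u != 0 -> forall w, exists p, horner_mx M p *m u = w.
Proof.
move=> irr_q size_q qM u_neq0 w.
pose phi (d : 'rV[F]_n.+1) := horner_mx M (rVpoly d) *m u.
have phi_inj : injective phi.
  move=> d1 d2 /eqP; rewrite -subr_eq0 /phi -mulmxBl -rmorphB -linearB /=.
  set p := rVpoly _; have [p0 _|p_neq0 /eqP pu0] := eqVneq p 0.
    by apply/eqP; rewrite -subr_eq0 -[_ - _]rVpolyK -/p p0 linear0.
  have p_unit : horner_mx M p \in unitmx.
    apply: horner_mx_coprime_unit qM _; rewrite irreducible_poly_coprime //.
    by apply/negP => /(dvdp_leq p_neq0); rewrite size_q leqNgt ltnS size_poly.
  by have := mulKmx p_unit u; rewrite pu0 mulmx0 => u0; rewrite -u0 eqxx in u_neq0.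
have := inj_card_onto phi_inj; rewrite !card_mx mulnC leqnn => /(_ isT w) /codomP [d ->].
by exists (rVpoly d).
Qed.

Lemma horner_mx_row_onto (F : finFieldType) n (q : {poly F}) (M : 'M[F]_n.+1)
    (v : 'rV[F]_n.+1) :
  irreducible_poly q -> size q = n.+2 -> horner_mx M q = 0 ->
  v != 0 -> forall w, exists p, v *m horner_mx M p = w.
Proof.
move=> irr_q size_q qM v_neq0 w.
have qMT : horner_mx M^T q = 0 by rewrite -horner_mx_trmx qM trmx0.
have [|p pE] := horner_mx_col_onto irr_q size_q qMT (u := v^T) _ w^T.
  by rewrite trmx_eq0.
by exists p; apply: trmx_inj; rewrite trmx_mul horner_mx_trmx.
Qed.

Section FiniteRingPowers.
Variable R : finNzRingType.
Local Notation K := #|R|`!.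
Implicit Types c : R.

Lemma expr_pigeonhole c : exists i j, [/\ (i < j)%N, (j <= #|R|)%N & c ^+ i = c ^+ j].
Proof.
have : ~~ injectiveb (fun i : 'I_#|R|.+1 => c ^+ i).
  by apply/injectiveP => /leq_card; rewrite card_ord ltnn.
case/injectivePn => i [j ij cij].
have [lt_ij|lt_ji|/val_inj eq_ij] := ltngtP i j; last by rewrite eq_ij eqxx in ij.
- by exists i, j; split; [| exact: ltn_ord j |].
- by exists j, i; split; [| exact: ltn_ord i |].
Qed.

Lemma expr_fact_card_idem c : c ^+ K * c ^+ K = c ^+ K.
Proof.
have [i [j [lt_ij le_jR cij]]] := expr_pigeonhole c.
have periodic t k : (i <= k)%N -> c ^+ (k + t * (j - i)) = c ^+ k.
  elim: t k => [|t IHt] k le_ik; first by rewrite addn0.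
  rewrite mulSn addnA IHt; last by rewrite (leq_trans le_ik) ?leq_addr.
  by rewrite -(subnK le_ik) -addnA subnKC ?(ltnW lt_ij) // !exprD cij.
have dvd_K : (j - i %| K)%N.
  by apply: dvdn_fact; rewrite subn_gt0 lt_ij (leq_trans (leq_subr _ _)).
rewrite -exprD -{2}(divnK dvd_K) periodic //.
exact: leq_trans (ltnW (leq_trans lt_ij le_jR)) (fact_geq _).
Qed.

Lemma expr_compl_idem c k : (1 - c ^+ K) ^+ k.+1 = 1 - c ^+ K.
Proof.
elim: k => [|k IHk]; first by rewrite expr1.
by rewrite exprS IHk mulrBr mulr1 mulrBl mul1r expr_fact_card_idem subrr subr0.
Qed.

Lemma exprM_compl c k : (c * (1 - c ^+ K)) ^+ k = c ^+ k * (1 - c ^+ K) ^+ k.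
Proof. by rewrite exprMn_comm //; apply/commrB/commrX/commr_refl/commr1. Qed.

Lemma fitting_nilpotent c : (c * (1 - c ^+ K)) ^+ K = 0.
Proof.
have := expr_compl_idem c K.-1; rewrite prednK ?fact_gt0 // => compl_K.
by rewrite exprM_compl compl_K mulrBr mulr1 expr_fact_card_idem subrr.
Qed.

Lemma fitting_exprE c k :
  c ^+ k * (1 - c ^+ K) = (c * (1 - c ^+ K)) ^+ k * (1 - c ^+ K).
Proof. by rewrite exprM_compl -mulrA -exprSr expr_compl_idem. Qed.

End FiniteRingPowers.

Section ShiftMatrix.
Variables (R : nzRingType) (n : nat).

Definition shiftmx m : 'M[R]_m := \matrix_(i, j) (i.+1 == j)%:R.

Lemma shiftmxX m k (i j : 'I_m) : (shiftmx m ^+ k) i j = ((i + k)%N == j)%:R.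
Proof.
elim: k i j => [|k IHk] i j; first by rewrite expr0 mxE addn0.
rewrite exprS -mulmxE mxE.
have [lt_im|le_mi] := ltnP i.+1 m.
  rewrite (bigD1 (Ordinal lt_im)) //= big1 ?addr0 => [|l /negPf nl].
    by rewrite !mxE eqxx mul1r IHk addSnnS.
  rewrite mxE; suff /negPf-> : i.+1 != l by rewrite mul0r.
  by apply: contraFneq nl => eq_il; apply/eqP/val_inj; rewrite /= eq_il.
rewrite big1 => [|l _]; last first.
  by rewrite mxE gtn_eqF ?mul0r // (leq_trans (ltn_ord l)).
by rewrite gtn_eqF // (leq_trans (ltn_ord j)) // (leq_trans le_mi) // addnS ltnS leq_addr.
Qed.

Lemma shiftmx_nilpotent : shiftmx n.+1 ^+ n.+1 = 0.
Proof.
by apply/matrixP => i j; rewrite shiftmxX mxE gtn_eqF // ltn_addl.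
Qed.

Lemma shiftmx_exprn_neq0 : shiftmx n.+1 ^+ n != 0.
Proof.
apply/eqP => /matrixP /(_ 0 ord_max); rewrite shiftmxX mxE add0n eqxx.
by move/eqP; rewrite oner_eq0.
Qed.

End ShiftMatrix.

Section NilpotentRank.
Variables (F : fieldType) (n : nat) (b : 'M[F]_n.+1).
Hypothesis b_nil : exists m, b ^+ m = 0.

Lemma mxrank_exprS_ltn k : b ^+ k.+1 != 0 -> (\rank (b ^+ k.+1) < \rank (b ^+ k))%N.
Proof.
move=> bk1_neq0; have [m bm] := b_nil.
have sub : (b ^+ k.+1 <= b ^+ k)%MS by rewrite exprS -mulmxE submxMl.
rewrite (ltn_leqif (mxrank_leqif_sup sub)); apply/negP => sub2.
have stable t : (b ^+ k <= b ^+ (k + t))%MS.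
  elim: t => [|t IHt]; first by rewrite addn0.
  by apply: submx_trans IHt _; have := submxMr (b ^+ t) sub2; rewrite !mulmxE -!exprD addSnnS.
move: (stable m); rewrite exprD bm mulr0 submx0 => /eqP bk0.
by move: bk1_neq0; rewrite exprSr bk0 mul0r eqxx.
Qed.

Lemma mxrank_nilpotent_exprn : b ^+ n != 0 -> \rank (b ^+ n) = 1%N.
Proof.
move=> bn_neq0.
have bound k : (k <= n)%N -> (\rank (b ^+ k) + k <= n.+1)%N.
  elim: k => [|k IHk] le_kn; first by rewrite expr0 addn0 rank_leq_row.
  have bk1_neq0 : b ^+ k.+1 != 0.
    apply: contraNneq bn_neq0 => bk1.
    by rewrite -[n in b ^+ n](subnK le_kn) exprD bk1 mulr0.
  have := mxrank_exprS_ltn bk1_neq0; have := IHk (ltnW le_kn); lia.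
have := bound n (leqnn n); have : (0 < \rank (b ^+ n))%N by rewrite lt0n mxrank_eq0.
lia.
Qed.

End NilpotentRank.

Lemma mxrank1_factor (F : fieldType) m p (e : 'M[F]_(m, p)) :
  \rank e = 1%N -> exists (u : 'cV[F]_m) (v : 'rV[F]_p), e = u *m v.
Proof.
move=> rank_e; exists (col_ebase e *m pid_mx 1), (pid_mx 1 *m row_ebase e).
by rewrite -{1}(mulmx_ebase e) rank_e !mulmxA -[_ *m pid_mx 1 *m pid_mx 1]mulmxA mul_pid_mx.
Qed.

Section SubalgebraClosure.
Variables (F : fieldType) (n : nat) (A : 'M[F]_n.+1 -> Prop).
Hypothesis A_subalg : is_subalgebra A.

Lemma subalg1 : A 1%:M. Proof. by case: A_subalg. Qed.

Lemma subalgD a b : A a -> A b -> A (a + b).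
Proof. by case: A_subalg => _ AD _ _; apply: AD. Qed.

Lemma subalgZ c a : A a -> A (c *: a).
Proof. by case: A_subalg => _ _ AZ _; apply: AZ. Qed.

Lemma subalgM a b : A a -> A b -> A (a * b).
Proof. by case: A_subalg => _ _ _ AM; rewrite -mulmxE; apply: AM. Qed.

Lemma subalg0 : A 0.
Proof. by rewrite -(scale0r 1%:M); apply/subalgZ/subalg1. Qed.

Lemma subalgB a b : A a -> A b -> A (a - b).
Proof. by move=> Aa Ab; apply: subalgD Aa _; rewrite -scaleN1r; apply: subalgZ. Qed.

Lemma subalgX a k : A a -> A (a ^+ k).
Proof.
move=> Aa; elim: k => [|k IHk]; first exact: subalg1.
by rewrite exprS; apply: subalgM.
Qed.

Lemma subalg_sum (I : Type) (r : seq I) (P : pred I) (f : I -> 'M[F]_n.+1) :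
  (forall i, P i -> A (f i)) -> A (\sum_(i <- r | P i) f i).
Proof.
move=> Af; elim/big_rec: _ => [|i x Pi Ax]; first exact: subalg0.
by apply: subalgD => //; apply: Af.
Qed.

Lemma subalg_horner a p : A a -> A (horner_mx a p).
Proof.
move=> Aa; elim/poly_ind: p => [|p c IHp]; first by rewrite rmorph0; apply: subalg0.
rewrite rmorphD rmorphM /= horner_mx_X horner_mx_C -scalemx1.
by apply: subalgD; [apply: subalgM | apply/subalgZ/subalg1].
Qed.

Lemma subalg_full : (forall i j, A (delta_mx i j)) -> forall M, A M.
Proof.
move=> A_delta M; rewrite (matrix_sum_delta M).
by apply: subalg_sum => i _; apply: subalg_sum => j _; apply: subalgZ.
Qed.

End SubalgebraClosure.

Section NullIdealOfSubalgebra.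
Variables (F : finFieldType) (n : nat) (A : 'M[F]_n.+1 -> Prop).
Hypotheses (A_subalg : is_subalgebra A)
  (null_ideal_sub : forall f, null_ideal A f -> null_ideal (fun _ : 'M_n.+1 => True) f).

Lemma subalg_irreducible_root q :
  irreducible_poly q -> q \is monic -> size q = n.+2 -> exists2 M, A M & horner_mx M q = 0.
Proof.
move=> irr_q q_monic size_q; have [C qC] := monic_has_matrix_root q_monic size_q.
pose f := \prod_(M : 'M[F]_n.+1 | ~~ (q %| mxminpoly M)) mxminpoly M.
have q_ndvd_f : ~~ (q %| f).
  by apply/negP => /(irreducible_dvdp_prod irr_q) [M /negP].
have [M AM fM_neq0] : exists2 M, A M & horner_mx M f != 0.
  apply: NNPP => no_M; move: q_ndvd_f.
  have f_null : null_ideal A f.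
    by move=> c Ac; apply: NNPP => fc; apply: no_M; exists c => //; apply/eqP.
  have fC : horner_mx C f = 0 := null_ideal_sub f_null I.
  by rewrite -(eqp_dvdl _ (mxminpoly_irreducible_root irr_q qC)) (mxminpoly_min fC).
exists M => //; apply: dvdp_mxminpoly_root size_q _.
apply: contraNT fM_neq0 => q_ndvd.
by rewrite /f (bigD1 M) //= rmorphM /= mx_root_minpoly mul0r.
Qed.

Lemma subalg_nilpotent : exists2 b, A b & (exists k, b ^+ k = 0) /\ b ^+ n != 0.
Proof.
apply: NNPP => no_nil; pose K := #|{: 'M[F]_n.+1}|`!.
have fitting_null c : A c -> c ^+ n * (1 - c ^+ K) = 0.
  move=> Ac; rewrite fitting_exprE; suff -> : (c * (1 - c ^+ K)) ^+ n = 0 by rewrite mul0r.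
  apply: NNPP => /eqP bn_neq0; apply: no_nil; exists (c * (1 - c ^+ K)).
    apply: (subalgM A_subalg Ac); apply: (subalgB A_subalg (subalg1 A_subalg)).
    exact: subalgX.
  by split=> //; exists K; apply: fitting_nilpotent.
pose g : {poly F} := 'X^n * (1 - 'X^K).
have g_null : null_ideal A g.
  by move=> c Ac; rewrite rmorphM rmorphB /= rmorph1 !rmorphXn /= horner_mx_X fitting_null.
have := null_ideal_sub g_null (c := shiftmx F n.+1) I.
rewrite rmorphM rmorphB /= rmorph1 !rmorphXn /= horner_mx_X mulrBr mulr1 -exprD.
have le_n1K : (n.+1 <= n + K)%N by rewrite -addn1 leq_add2l fact_gt0.
rewrite -(subnK le_n1K) exprD shiftmx_nilpotent mulr0 subr0 => /eqP.
by rewrite (negPf (shiftmx_exprn_neq0 F n)).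
Qed.

Lemma subalg_delta_mx e : A e -> \rank e = 1%N -> forall i j, A (delta_mx i j).
Proof.
move=> Ae rank_e i j.
have [q [irr_q q_monic size_q]] := exists_irreducible_poly F (ltn0Sn n).
have [M AM qM] := subalg_irreducible_root irr_q q_monic size_q.
have [u [v euv]] := mxrank1_factor rank_e.
have u_neq0 : u != 0 by apply: contra_eqN rank_e => /eqP u0; rewrite euv u0 mul0mx mxrank0.
have v_neq0 : v != 0 by apply: contra_eqN rank_e => /eqP v0; rewrite euv v0 mulmx0 mxrank0.
have [p pu] := horner_mx_col_onto irr_q size_q qM u_neq0 (delta_mx i 0).
have [r vr] := horner_mx_row_onto irr_q size_q qM v_neq0 (delta_mx 0 j).
have -> : delta_mx i j = horner_mx M p * e * horner_mx M r.
  by rewrite -!mulmxE euv !mulmxA pu -mulmxA vr mul_delta_mx.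
by apply: (subalgM A_subalg (subalgM A_subalg _ Ae)); apply: subalg_horner.
Qed.

End NullIdealOfSubalgebra.

Unset Implicit Arguments.

Theorem mainTheorem5 (F : finFieldType) (n : nat) (A : 'M[F]_n.+1 -> Prop) :
  is_subalgebra A ->
  (forall f : {poly F}, null_ideal A f <-> null_ideal (fun _ : 'M[F]_n.+1 => True) f) ->
  forall M : 'M[F]_n.+1, A M.
Proof.
move=> A_subalg null_eq.
have null_sub f : null_ideal A f -> null_ideal _ f := proj1 (null_eq f).
have [b Ab [b_nil bn_neq0]] := subalg_nilpotent A_subalg null_sub.
apply: (subalg_full A_subalg) => i j.
apply: (subalg_delta_mx A_subalg null_sub (subalgX A_subalg n Ab)).
exact: mxrank_nilpotent_exprn.
Qed.
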